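(* Let $n\geq 5$. For a primitive root of unity $q$ of order $k$, let $\beta_{-q}$ be the reduced Burau representation of $B_n$ evaluated at $-q$, and let $B_n[k]$ be the normal subgroup of $B_n$ generated by $g_1^k,\ldots,g_{n-1}^k$. Then the equality $\ker\beta_{-q}=B_n[k]$ fails for all but finitely many primitive roots of unity $q$ of even order $k$.
   Context: $B_n$ is the braid group with standard generators $g_1,\ldots,g_{n-1}$. The reduced Burau representation $\beta_t:B_n\to GL(n-1,\mathbb{Z}[t,t^{-1}])$ is the standard one: $\beta_t(g_1)=\begin{pmatrix}-t&1\\0&1\end{pmatrix}\oplus \mathbf{1}_{n-3}$, $\beta_t(g_j)=\mathbf{1}_{j-2}\oplus\begin{pmatrix}1&0&0\\ t&-t&1\\0&0&1\end{pmatrix}\oplus\mathbf{1}_{n-j-2}$ for $2\leq j\leq n-2$, and $\beta_t(g_{n-1})=\mathbf{1}_{n-3}\oplus\begin{pmatrix}1&0\\ t&-t\end{pmatrix}$; $\beta_{-q}$ means specializing $t=-q$. *)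

From Stdlib Require Import Relation_Operators.
From mathcomp Require Import all_boot all_order all_algebra all_field.
Unset Implicit Arguments. Unset Printing Implicit Defensive.
Import GRing.Theory Num.Theory.
Local Open Scope ring_scope.

(* Braid words on B_n: a letter (i, true) is the generator g_{i+1},
   (i, false) its inverse g_{i+1}^{-1}; i : 'I_(n.-1). *)
Definition letter (n : nat) := ('I_n.-1 * bool)%type.
Definition word (n : nat) := seq (letter n).

Definition winv n (w : word n) : word n := [seq (x.1, ~~ x.2) | x <- rev w].

Inductive braid_step (n : nat) : word n -> word n -> Prop :=
| bs_free (x y : word n) (a : 'I_n.-1) (b : bool) :
    braid_step n (x ++ [:: (a, b); (a, ~~ b)] ++ y) (x ++ y)
| bs_comm (x y : word n) (i j : 'I_n.-1) :
    ((i.+1 < j)%N || (j.+1 < i)%N) ->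
    braid_step n (x ++ [:: (i, true); (j, true)] ++ y)
               (x ++ [:: (j, true); (i, true)] ++ y)
| bs_braid (x y : word n) (i j : 'I_n.-1) :
    nat_of_ord j = (nat_of_ord i).+1 ->
    braid_step n (x ++ [:: (i, true); (j, true); (i, true)] ++ y)
               (x ++ [:: (j, true); (i, true); (j, true)] ++ y).

Definition braid_eq (n : nat) : word n -> word n -> Prop :=
  clos_refl_sym_trans (word n) (braid_step n).

Definition conj_pow n (k : nat) (r : word n * letter n) : word n :=
  r.1 ++ nseq k r.2 ++ winv n r.1.

Definition in_Bnk n (k : nat) (w : word n) : Prop :=
  exists rs : seq (word n * letter n),
    braid_eq n w (flatten [seq conj_pow n k r | r <- rs]).

Definition burau_gen n (t : algC) (i : 'I_n.-1) : 'M[algC]_(n.-1) :=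
  \matrix_(r < n.-1, c < n.-1)
    if r != i then (r == c)%:R
    else if (c.+1 == i)%N then t
    else if c == i then - t
    else if (nat_of_ord c == i.+1)%N then 1 else 0.

Definition burau_letter n (t : algC) (x : letter n) : 'M[algC]_(n.-1) :=
  if x.2 then burau_gen n t x.1 else invmx (burau_gen n t x.1).

Definition burau_eval n (t : algC) (w : word n) : 'M[algC]_(n.-1) :=
  foldr (fun x M => burau_letter n t x *m M) 1%:M w.

(* Bigelow's braid [bigelow] of B_5 lies in the kernel of the reduced Burau representation for
   every value of t. For q <> -1 with q ^+ k = 1 and k even, the Hecke relation
   (T_i - q)(T_i + 1) = 0 makes every T_i diagonalisable with eigenvalues q and -1, so T_i ^+ k = 1:
   every representation of B_n through the Hecke algebra kills B_n[k]. In the Hecke representation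
   on functions of bit strings, a matrix coefficient of [bigelow] is q ^- 61 * D(q) for an explicit
   nonzero integer polynomial D, so [bigelow] is not in B_n[k] unless q is -1 or a root of D.
   Both facts about [bigelow] are checked by computing with integer polynomials. *)

From Stdlib Require Import BinNums FunctionalExtensionality.
From mathcomp Require Import all_boot all_order all_algebra all_field.
From mathcomp Require Import zify ring ssrZ.
Import GRing.Theory.
Local Open Scope ring_scope.

Section IntegerPolynomials.

Context {R : comNzRingType}.

Fixpoint zadd (a b : seq Z) : seq Z :=
  match a, b with
  | [::], _ => b
  | _, [::] => a
  | x :: a', y :: b' => (x + y) :: zadd a' b'
  end.

Definition zopp (a : seq Z) : seq Z := map -%R a.

Definition zsub (a b : seq Z) : seq Z := zadd a (zopp b).

Definition zmulX (a : seq Z) : seq Z := 0 :: a.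

Definition zscale (c : Z) (a : seq Z) : seq Z := map ( *%R c) a.

Fixpoint zmul (a b : seq Z) : seq Z :=
  if a is c :: a' then zadd (zscale c b) (zmulX (zmul a' b)) else [::].

Definition zpoly (a : seq Z) : {poly R} := Poly [seq (int_of_Z c)%:~R | c <- a].

Lemma zpoly_cons c a : zpoly (c :: a) = zpoly a * 'X + ((int_of_Z c)%:~R)%:P.
Proof. exact: cons_poly_def. Qed.

Lemma zpolyD a b : zpoly (zadd a b) = zpoly a + zpoly b.
Proof.
elim: a b => [|x a IHa] [|y b]; rewrite ?add0r ?addr0 //=.
by rewrite !zpoly_cons IHa rmorphD intrD polyCD; ring.
Qed.

Lemma zpolyN a : zpoly (zopp a) = - zpoly a.
Proof.
elim: a => [|x a IHa]; first by rewrite oppr0.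
by rewrite /= !zpoly_cons -/(zopp a) IHa rmorphN intrN polyCN; ring.
Qed.

Lemma zpolyB a b : zpoly (zsub a b) = zpoly a - zpoly b.
Proof. by rewrite zpolyD zpolyN. Qed.

Lemma zpolyX a : zpoly (zmulX a) = zpoly a * 'X.
Proof. by rewrite zpoly_cons rmorph0 addr0. Qed.

Lemma zpolyZ c a : zpoly (zscale c a) = ((int_of_Z c)%:~R)%:P * zpoly a.
Proof.
elim: a => [|x a IHa]; first by rewrite mulr0.
by rewrite /= !zpoly_cons -/(zscale c a) IHa rmorphM intrM polyCM; ring.
Qed.

Lemma zpolyM a b : zpoly (zmul a b) = zpoly a * zpoly b.
Proof.
elim: a => [|c a IHa] /=; first by rewrite mul0r.
by rewrite zpolyD zpolyZ zpolyX IHa zpoly_cons; ring.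
Qed.

Definition zXn (N : nat) : seq Z := rcons (nseq N 0) 1.

Lemma zpoly_zXn N : zpoly (zXn N) = 'X^N.
Proof.
elim: N => [|N IHN]; first by rewrite /zXn /= zpoly_cons rmorph1 mul0r add0r expr0.
by rewrite -[zXn N.+1]/(zmulX (zXn N)) zpolyX IHN exprSr.
Qed.

Lemma zpoly_eq0 a : all (eq_op^~ 0) a -> zpoly a = 0.
Proof.
elim: a => [|x a IHa] //= /andP[/eqP-> /IHa za].
by rewrite zpoly_cons za rmorph0 mul0r addr0.
Qed.

Lemma coef_zpoly a i : (zpoly a)`_i = (int_of_Z (nth 0 a i))%:~R.
Proof.
rewrite coef_Poly; have [lt_i_a | le_a_i] := ltnP i (size a).
  by rewrite (nth_map 0).
by rewrite !nth_default ?size_map // rmorph0.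
Qed.

End IntegerPolynomials.

Definition nat_word {n} (w : word n) : seq (nat * bool) := [seq (nat_of_ord l.1, l.2) | l <- w].

Lemma nat_word_cat n (u v : word n) : nat_word (u ++ v) = nat_word u ++ nat_word v.
Proof. exact: map_cat. Qed.

(* Multiplying the inverse letters by [s] clears the denominators of T_i^-1 and of the inverse
   Burau matrices, so that words act by polynomial expressions. *)
Section ScaledInverseLetters.

Context {R : comNzRingType} {T : Type}.
Variables (s : R) (act : nat * bool -> (T -> R) -> T -> R).
Hypothesis act_scale : forall l a f, act l (fun x => a * f x) = fun x => a * act l f x.

Definition scale_inverse_letters l f := if l.2 then act l f else fun x => s * act l f x.

Lemma foldr_scale_inverse_letters w f :
  foldr scale_inverse_letters f w = fun x => s ^+ count (fun l => ~~ l.2) w * foldr act f w x.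
Proof.
elim: w => [|[i [|]] w IHw] /=.
- by apply: functional_extensionality => x; rewrite mul1r.
- by rewrite /scale_inverse_letters /= IHw act_scale.
- rewrite /scale_inverse_letters /= IHw act_scale; apply: functional_extensionality => x.
  by rewrite exprS mulrA.
Qed.

End ScaledInverseLetters.

Definition swap_at (i : nat) (x : nat -> bool) : nat -> bool :=
  fun j => if j == i then x i.+1 else if j == i.+1 then x i else x j.

Lemma swap_at_l i x : swap_at i x i = x i.+1.
Proof. by rewrite /swap_at eqxx. Qed.

Lemma swap_at_r i x : swap_at i x i.+1 = x i.
Proof. by rewrite /swap_at eqxx; case: ifP => /eqP; lia. Qed.

Lemma swap_at_out i x j : j != i -> j != i.+1 -> swap_at i x j = x j.
Proof. by rewrite /swap_at => /negbTE-> /negbTE->. Qed.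

Lemma swap_atK i : involutive (swap_at i).
Proof.
move=> x; apply: functional_extensionality => j; rewrite /swap_at.
by repeat case: ifP => /eqP ?; subst; rewrite ?eqxx; try lia.
Qed.

Lemma swap_atC (i j : nat) x : (i.+1 < j)%N || (j.+1 < i)%N ->
  swap_at i (swap_at j x) = swap_at j (swap_at i x).
Proof.
move=> far; apply: functional_extensionality => k; rewrite /swap_at.
by repeat case: ifP => /eqP ?; try (congr x; lia); lia.
Qed.

Lemma swap_at_braid i x :
  swap_at i (swap_at i.+1 (swap_at i x)) = swap_at i.+1 (swap_at i (swap_at i.+1 x)).
Proof.
apply: functional_extensionality => j; rewrite /swap_at.
by repeat case: ifP => /eqP ?; try (congr x; lia); lia.
Qed.

Section HeckeRepresentation.

Context {F : fieldType}.
Variable q : F.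

Definition hecke_diag (a b : bool) : F := if a == b then q else if a then q - 1 else 0.
Definition hecke_swap (a b : bool) : F := if a == b then 0 else if a then 1 else q.

(* A function on bit strings is a vector of a tensor power of F^2; [hecke i] acts on the tensor
   factors i and i+1. *)
Definition hecke (i : nat) (f : (nat -> bool) -> F) (x : nat -> bool) : F :=
  hecke_diag (x i) (x i.+1) * f x + hecke_swap (x i) (x i.+1) * f (swap_at i x).

Definition hecke_inv (i : nat) (f : (nat -> bool) -> F) (x : nat -> bool) : F :=
  q^-1 * (hecke i f x - (q - 1) * f x).

Lemma hecke_add i g h : hecke i (fun x => g x + h x) = fun x => hecke i g x + hecke i h x.
Proof. by apply: functional_extensionality => x; rewrite /hecke; ring. Qed.

Lemma hecke_scale i a g : hecke i (fun x => a * g x) = fun x => a * hecke i g x.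
Proof. by apply: functional_extensionality => x; rewrite /hecke; ring. Qed.

Lemma hecke_quadratic i f : hecke i (hecke i f) = fun x => (q - 1) * hecke i f x + q * f x.
Proof.
apply: functional_extensionality => x; rewrite /hecke swap_at_l swap_at_r swap_atK.
by case: (x i); case: (x i.+1); rewrite /hecke_diag /hecke_swap /=; ring.
Qed.

Lemma hecke_comm (i j : nat) f : (i.+1 < j)%N || (j.+1 < i)%N ->
  hecke i (hecke j f) = hecke j (hecke i f).
Proof.
move=> far; apply: functional_extensionality => x; rewrite /hecke (swap_atC _ _ x far).
have [sj_i sj_i1] : swap_at j x i = x i /\ swap_at j x i.+1 = x i.+1.
  by split; apply: swap_at_out; lia.
have [si_j si_j1] : swap_at i x j = x j /\ swap_at i x j.+1 = x j.+1.
  by split; apply: swap_at_out; lia.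
by rewrite sj_i sj_i1 si_j si_j1; ring.
Qed.

Lemma hecke_braid i f :
  hecke i (hecke i.+1 (hecke i f)) = hecke i.+1 (hecke i (hecke i.+1 f)).
Proof.
apply: functional_extensionality => x; rewrite /hecke.
have si_2 y : swap_at i y i.+2 = y i.+2 by apply: swap_at_out; lia.
have si1_0 y : swap_at i.+1 y i = y i by apply: swap_at_out; lia.
rewrite !(swap_at_l, swap_at_r, si_2, si1_0) swap_at_braid !swap_atK.
by case: (x i); case: (x i.+1); case: (x i.+2); rewrite /hecke_diag /hecke_swap /=; ring.
Qed.

Lemma iter_hecke_eigen i c g m : hecke i g = (fun x => c * g x) ->
  iter m (hecke i) g = fun x => c ^+ m * g x.
Proof.
move=> eig; elim: m => [|m IHm] /=.
  by apply: functional_extensionality => x; rewrite mul1r.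
rewrite IHm hecke_scale eig; apply: functional_extensionality => x.
by rewrite exprS mulrCA mulrA.
Qed.

(* The Hecke relation splits every f into eigenvectors for the eigenvalues q and -1. *)
Lemma iter_hecke_order i k f : q ^+ k = 1 -> ~~ odd k -> q + 1 != 0 ->
  iter k (hecke i) f = f.
Proof.
move=> qk even_k q1.
set e1 := fun x => (q + 1)^-1 * hecke i f x + (q + 1)^-1 * f x.
set e2 := fun x => (q * (q + 1)^-1) * f x + (- (q + 1)^-1) * hecke i f x.
have ef : f = fun x => e1 x + e2 x.
  by apply: functional_extensionality => x; rewrite /e1 /e2; field.
have e1q : hecke i e1 = fun x => q * e1 x.
  rewrite /e1 hecke_add !hecke_scale hecke_quadratic.
  by apply: functional_extensionality => x; field.
have e2m : hecke i e2 = fun x => -1 * e2 x.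
  rewrite /e2 hecke_add !hecke_scale hecke_quadratic.
  by apply: functional_extensionality => x; field.
have iter_lin m : iter m (hecke i) f = fun x => iter m (hecke i) e1 x + iter m (hecke i) e2 x.
  by elim: m => [|m /= ->]; [exact: ef | exact: hecke_add].
rewrite iter_lin (iter_hecke_eigen _ _ _ _ e1q) (iter_hecke_eigen _ _ _ _ e2m) qk.
rewrite -signr_odd (negbTE even_k) expr0 [in RHS]ef.
by apply: functional_extensionality => x; ring.
Qed.

Hypothesis q_neq0 : q != 0.

Lemma hecke_invK i : cancel (hecke_inv i) (hecke i).
Proof.
move=> f; have -> : hecke_inv i f = fun x => q^-1 * hecke i f x + - (q^-1 * (q - 1)) * f x.
  by apply: functional_extensionality => x; rewrite /hecke_inv; ring.
by rewrite hecke_add !hecke_scale hecke_quadratic; apply: functional_extensionality => x; field.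
Qed.

Lemma heckeK i : cancel (hecke i) (hecke_inv i).
Proof.
by move=> f; apply: functional_extensionality => x; rewrite /hecke_inv hecke_quadratic; field.
Qed.

Definition hecke_letter (l : nat * bool) := if l.2 then hecke l.1 else hecke_inv l.1.

Definition hecke_word (w : seq (nat * bool)) f := foldr hecke_letter f w.

Lemma hecke_letter_scale l a f :
  hecke_letter l (fun x => a * f x) = fun x => a * hecke_letter l f x.
Proof.
case: l => i [] /=; rewrite /hecke_letter /= ?hecke_scale //.
by apply: functional_extensionality => x; rewrite /hecke_inv hecke_scale; ring.
Qed.

Lemma hecke_word_cat u v f : hecke_word (u ++ v) f = hecke_word u (hecke_word v f).
Proof. exact: foldr_cat. Qed.

Lemma hecke_letter_inv i b f : hecke_letter (i, b) (hecke_letter (i, ~~ b) f) = f.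
Proof. by case: b; rewrite /hecke_letter /= ?hecke_invK ?heckeK. Qed.

Lemma hecke_word_winv n (u : word n) f :
  hecke_word (nat_word u) (hecke_word (nat_word (winv n u)) f) = f.
Proof.
elim: u f => [|[i b] u IHu] f //=.
rewrite /winv rev_cons map_rcons -cats1 nat_word_cat hecke_word_cat /=.
by rewrite IHu hecke_letter_inv.
Qed.

Lemma hecke_word_step n (u v : word n) :
  braid_step n u v -> hecke_word (nat_word u) = hecke_word (nat_word v).
Proof.
case=> [x y a b | x y i j far | x y i j ji]; apply: functional_extensionality => f;
  rewrite !nat_word_cat !hecke_word_cat /=.
- by rewrite hecke_letter_inv.
- by rewrite /hecke_letter /= hecke_comm.
- by rewrite /hecke_letter /= ji hecke_braid.
Qed.

Lemma hecke_word_braid_eq n (u v : word n) :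
  braid_eq n u v -> hecke_word (nat_word u) = hecke_word (nat_word v).
Proof. by elim=> [? ? /hecke_word_step | | ? ? _ -> | ? ? ? _ -> _ ->]. Qed.

Lemma hecke_word_nseq l m f : hecke_word (nseq m l) f = iter m (hecke_letter l) f.
Proof. by elim: m => //= m ->. Qed.

Lemma iter_hecke_letter_order l k f : q ^+ k = 1 -> ~~ odd k -> q + 1 != 0 ->
  iter k (hecke_letter l) f = f.
Proof.
case: l => i [] qk even_k q1; rewrite /hecke_letter /=; first exact: iter_hecke_order.
rewrite -{1}(iter_hecke_order i k f qk even_k q1).
by elim: k {qk even_k} f => // k IHk f; rewrite iterSr /= heckeK.
Qed.

Lemma hecke_word_Bnk n k (w : word n) f : q ^+ k = 1 -> ~~ odd k -> q + 1 != 0 ->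
  in_Bnk n k w -> hecke_word (nat_word w) f = f.
Proof.
move=> qk even_k q1 [rs /hecke_word_braid_eq ->].
elim: rs f => [|[u l] rs IHrs] f //=.
rewrite nat_word_cat hecke_word_cat IHrs /conj_pow !nat_word_cat !hecke_word_cat.
by rewrite /nat_word map_nseq hecke_word_nseq iter_hecke_letter_order // hecke_word_winv.
Qed.

End HeckeRepresentation.

Section BurauCoordinates.

Context {F : fieldType}.
Variable t : F.

Definition burau (i : nat) (u : nat -> F) : nat -> F :=
  fun r => if r == i then (if i is j.+1 then t * u j else 0) - t * u i + u i.+1 else u r.

Definition burau_inv (i : nat) (u : nat -> F) : nat -> F :=
  fun r => if r == i then (if i is j.+1 then u j else 0) - t^-1 * u i + t^-1 * u i.+1 else u r.

Lemma burau_scale i a u : burau i (fun r => a * u r) = fun r => a * burau i u r.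
Proof.
apply: functional_extensionality => r; rewrite /burau.
by case: (r == i) => //; case: i => [|i] /=; ring.
Qed.

Lemma burau_inv_scale i a u : burau_inv i (fun r => a * u r) = fun r => a * burau_inv i u r.
Proof.
apply: functional_extensionality => r; rewrite /burau_inv.
by case: (r == i) => //; case: i => [|i] /=; ring.
Qed.

Hypothesis t_neq0 : t != 0.

Lemma burau_invK i : cancel (burau_inv i) (burau i).
Proof.
move=> u; apply: functional_extensionality => r; rewrite /burau /burau_inv.
have [-> | //] := eqVneq r i; rewrite eqxx ifN_eq; last by lia.
by case: i => [|i]; rewrite /= ?ifN_eq; try lia; field.
Qed.

Lemma burauK i : cancel (burau i) (burau_inv i).
Proof.
move=> u; apply: functional_extensionality => r; rewrite /burau /burau_inv.
have [-> | //] := eqVneq r i; rewrite eqxx ifN_eq; last by lia.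
by case: i => [|i]; rewrite /= ?ifN_eq; try lia; field.
Qed.

Definition burau_letter (l : nat * bool) := if l.2 then burau l.1 else burau_inv l.1.

Definition burau_word (w : seq (nat * bool)) u := foldr burau_letter u w.

Lemma burau_letter_scale l a u :
  burau_letter l (fun r => a * u r) = fun r => a * burau_letter l u r.
Proof. by case: l => i []; [exact: burau_scale | exact: burau_inv_scale]. Qed.

Lemma burau_word_local w u r : all (fun l => (l.1 < 4)%N) w -> (5 <= r)%N ->
  burau_word w u r = u r.
Proof.
move=> w_lt4 le5_r; elim: w w_lt4 => [|[i b] w IHw] //= /andP[/= lt_i4 w_lt4].
have /negbTE ne_ri : r != i by apply/eqP; lia.
by case: b; rewrite /burau_letter /burau /burau_inv /= ne_ri IHw.
Qed.

End BurauCoordinates.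

Definition coords {m} (v : 'cV[algC]_m) : nat -> algC :=
  fun r => if insub r is Some i then v i 0 else 0.

Definition delta {R : nzSemiRingType} (c : nat) : nat -> R := fun r => (r == c)%:R.

Lemma coords_ord m (v : 'cV[algC]_m) (r : 'I_m) : coords v r = v r 0.
Proof. by rewrite /coords valK. Qed.

Lemma coords_lt m (v : 'cV[algC]_m) r (lt_r_m : (r < m)%N) : coords v r = v (Ordinal lt_r_m) 0.
Proof. by rewrite /coords insubT. Qed.

Lemma coords_out m (v : 'cV[algC]_m) r : (m <= r)%N -> coords v r = 0.
Proof. by move=> le_m_r; rewrite /coords insubF // ltnNge le_m_r. Qed.

Lemma coords_delta_mx m (c : 'I_m) : coords (delta_mx c 0) = delta c.
Proof.
apply: functional_extensionality => r; rewrite /delta.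
have [lt_r_m | le_m_r] := ltnP r m; last first.
  have lt_c_m := ltn_ord c; rewrite coords_out //; case: eqP => // eq_rc; exfalso; lia.
by rewrite (coords_lt _ _ _ lt_r_m) mxE eqxx andbT.
Qed.

Lemma sum_delta_coords m (v : 'cV[algC]_m) (a : nat) :
  \sum_(j < m) (j == a :> nat)%:R * v j 0 = coords v a.
Proof.
have [lt_a_m | le_m_a] := ltnP a m; last first.
  rewrite coords_out // big1 // => j _; have lt_j_m := ltn_ord j.
  by case: eqP => [eq_ja|_]; rewrite ?mul0r //; exfalso; lia.
rewrite -[a]/(nat_of_ord (Ordinal lt_a_m)) coords_ord (bigD1 (Ordinal lt_a_m)) //=.
rewrite eqxx mul1r big1 ?addr0 // => j /negbTE ne_j.
by rewrite (_ : (j == a :> nat) = false) ?mul0r.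
Qed.

Lemma burau_gen_row n t (i j : 'I_n.-1) : burau_gen n t i i j =
  t * (j.+1 == i)%:R - t * (j == i :> nat)%:R + (j == i.+1 :> nat)%:R.
Proof.
rewrite mxE eqxx /= -[j == i]/(j == i :> nat).
move: (nat_of_ord j) (nat_of_ord i) => a b.
case: (a.+1 =P b) => ?; case: (a =P b) => ?; case: (a =P b.+1) => ? /=;
  first [exfalso; lia | ring].
Qed.

Lemma coords_burau_gen n t (i : 'I_n.-1) (v : 'cV[algC]_n.-1) :
  coords (burau_gen n t i *m v) = burau t i (coords v).
Proof.
apply: functional_extensionality => r; rewrite /burau.
have [lt_r_n | le_n_r] := ltnP r n.-1; last first.
  have lt_i_n := ltn_ord i; rewrite coords_out // ifN_eq ?coords_out //; apply/eqP; lia.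
rewrite -[r]/(nat_of_ord (Ordinal lt_r_n)) coords_ord mxE.
have [ri | ne_ri] := eqVneq (Ordinal lt_r_n) i.
  rewrite ri eqxx (eq_bigr (fun j : 'I_n.-1 => t * ((j.+1 == i)%:R * v j 0)
      - t * ((j == i :> nat)%:R * v j 0) + (j == i.+1 :> nat)%:R * v j 0)); last first.
    by move=> j _; rewrite burau_gen_row; ring.
  rewrite !big_split /= sumrN -!mulr_sumr !sum_delta_coords.
  congr (_ - _ + _); move: (nat_of_ord i) => [|i'] /=.
    by rewrite big1 ?mulr0 // => j _; rewrite mul0r.
  by rewrite (eq_bigr (fun j : 'I_n.-1 => (j == i' :> nat)%:R * v j 0)) ?sum_delta_coords.
rewrite ifN_eq // -sum_delta_coords; apply: eq_bigr => j _.
by rewrite mxE ne_ri eq_sym.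
Qed.

Lemma mulmx_coords m p (A : 'M[algC]_m) (B : 'M[algC]_(m, p)) r c :
  (A *m B) r c = coords (A *m col c B) r.
Proof. by rewrite coords_ord !mxE; apply: eq_bigr => j _; rewrite mxE. Qed.

Section BurauMatrices.

Variables (n : nat) (t : algC).
Hypothesis t_neq0 : t != 0.

Lemma burau_gen_unit (i : 'I_n.-1) : burau_gen n t i \in unitmx.
Proof.
pose B := \matrix_(r < n.-1, c < n.-1) burau_inv t i (delta c) r.
have col_B c : coords (col c B) = burau_inv t i (delta c).
  apply: functional_extensionality => r.
  have [lt_r_n | le_n_r] := ltnP r n.-1.
    by rewrite (coords_lt _ _ _ lt_r_n) !mxE.
  have [lt_i_n lt_c_n] := (ltn_ord i, ltn_ord c).
  rewrite coords_out // /burau_inv ifN_eq /delta; last by apply/eqP; lia.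
  by case: eqP => // eq_rc; exfalso; lia.
suff /mulmx1_unit[] : burau_gen n t i *m B = 1%:M by [].
apply/matrixP => r c.
by rewrite mulmx_coords coords_burau_gen col_B burau_invK // /delta mxE.
Qed.

Lemma coords_burau_gen_inv (i : 'I_n.-1) (v : 'cV[algC]_n.-1) :
  coords (invmx (burau_gen n t i) *m v) = burau_inv t i (coords v).
Proof. by rewrite -{2}[v](mulKVmx (burau_gen_unit i)) coords_burau_gen burauK. Qed.

Lemma coords_burau_eval (w : word n) (v : 'cV[algC]_n.-1) :
  coords (burau_eval n t w *m v) = burau_word t (nat_word w) (coords v).
Proof.
elim: w => [|[i b] w IHw] /=; first by rewrite mul1mx.
rewrite -mulmxA /burau_letter /=; case: b => /=.
- by rewrite coords_burau_gen IHw.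
- by rewrite coords_burau_gen_inv IHw.
Qed.

Lemma burau_eval_eq1 (w : word n) :
  (forall c : 'I_n.-1, burau_word t (nat_word w) (delta c) = delta c) ->
  burau_eval n t w = 1%:M.
Proof.
move=> fix_delta; apply/matrixP => r c.
by rewrite -[burau_eval n t w]mulmx1 mulmx_coords coords_burau_eval col1 coords_delta_mx
  fix_delta /delta mxE.
Qed.

End BurauMatrices.

Definition inv_letters (w : seq (nat * bool)) : seq (nat * bool) :=
  [seq (l.1, ~~ l.2) | l <- rev w].

Section BigelowBraid.

Local Open Scope nat_scope.

Definition bigelow_psi1 : seq (nat * bool) :=
  [:: (2, false); (1, true); (0, true); (0, true); (1, true); (3, true); (3, true); (3, true);
      (2, true); (1, true)].

Definition bigelow_psi2 : seq (nat * bool) :=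
  [:: (3, false); (2, true); (1, true); (0, false); (0, false); (1, true); (0, true); (0, true);
      (1, true); (1, true); (0, true)] ++ nseq 5 (3, true).

Definition bigelow_a : seq (nat * bool) :=
  inv_letters bigelow_psi1 ++ [:: (3, true)] ++ bigelow_psi1.

Definition bigelow_b : seq (nat * bool) :=
  inv_letters bigelow_psi2
  ++ [:: (3, true); (2, true); (1, true); (0, true); (0, true); (1, true); (2, true); (3, true)]
  ++ bigelow_psi2.

(* Bigelow's element [psi1^-1 s_4 psi1, psi2^-1 s_4 s_3 s_2 s_1^2 s_2 s_3 s_4 psi2] of B_5,
   where the letter (i, b) stands for s_(i+1) if b and for its inverse otherwise. *)
Definition bigelow : seq (nat * bool) :=
  inv_letters bigelow_a ++ inv_letters bigelow_b ++ bigelow_a ++ bigelow_b.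

Lemma bigelow_letters_lt4 : all (fun l => l.1 < 4) bigelow.
Proof. by vm_compute. Qed.

End BigelowBraid.

Definition bigelow_inv_count : nat := count (fun l => ~~ l.2) bigelow.

Section SymbolicBurau.

Definition zburau_row (l : nat * bool) (V : seq (seq Z)) (r : nat) : seq Z :=
  let: (i, b) := l in
  if r == i then
    zadd (zsub (if i is j.+1 then zmulX (nth [::] V j) else [::])
               (if b then zmulX (nth [::] V i) else nth [::] V i))
         (nth [::] V i.+1)
  else if b then nth [::] V r else zmulX (nth [::] V r).

Definition zburau_letter l V : seq (seq Z) := [seq zburau_row l V r | r <- iota 0 5].

Definition zburau_word (w : seq (nat * bool)) V := foldr zburau_letter V w.

Context {F : fieldType}.
Variable t : F.
Hypothesis t_neq0 : t != 0.

Definition burau_agrees (u : nat -> F) (V : seq (seq Z)) :=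
  forall r, (r < 5)%N -> u r = (zpoly (nth [::] V r)).[t].

Let burau_scaled := scale_inverse_letters t (burau_letter t).

Lemma zburau_letter_agrees l u V : (l.1 < 4)%N -> burau_agrees u V ->
  burau_agrees (burau_scaled l u) (zburau_letter l V).
Proof.
case: l => i b /= lt_i4 uV r lt_r5.
have [lt_i5 lt_i15] : (i < 5)%N /\ (i.+1 < 5)%N by lia.
rewrite (nth_map 0%N) ?size_iota // nth_iota // add0n /zburau_row.
rewrite /burau_scaled /scale_inverse_letters /burau_letter /burau /burau_inv.
case: b => /=; (have [_ | _] := eqVneq r i; last by rewrite ?zpolyX ?hornerE (uV _ lt_r5) 1?mulrC);
  rewrite zpolyD zpolyB ?zpolyX !hornerE -(uV _ lt_i5) -(uV _ lt_i15);
  case: i lt_i4 lt_i5 {lt_r5 lt_i15} => [|j] _ lt_j5 /=;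
  by rewrite ?zpolyX ?hornerE -?(uV _ (ltnW lt_j5)) ?horner0; field.
Qed.

Lemma zburau_word_agrees w u V : all (fun l => (l.1 < 4)%N) w -> burau_agrees u V ->
  burau_agrees (foldr burau_scaled u w) (zburau_word w V).
Proof.
move=> w_lt4 uV; elim: w w_lt4 => [|l w IHw] //= /andP[l_lt4 w_lt4].
exact: zburau_letter_agrees (IHw w_lt4).
Qed.

End SymbolicBurau.

Definition zunit (c : nat) : seq (seq Z) := [seq if r == c then [:: 1] else [::] | r <- iota 0 5].

(* With rescaled inverse letters, [bigelow] must act as t ^+ bigelow_inv_count on the coordinates
   0..4 it touches; c = 5 gives the zero vector, standing for every e_c with c >= 5. *)
Definition bigelow_burau_check : bool :=
  all (fun c => all (fun r =>
         all (eq_op^~ 0) (zsub (nth [::] (zburau_word bigelow (zunit c)) r)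
                               (if r == c then zXn bigelow_inv_count else [::])))
       (iota 0 5))
    (iota 0 6).

Lemma bigelow_burau_checked : bigelow_burau_check.
Proof. by vm_compute. Qed.

Lemma bigelow_burau_entry (R : comNzRingType) c r : (c <= 5)%N -> (r < 5)%N ->
  zpoly (nth [::] (zburau_word bigelow (zunit c)) r)
  = if r == c then 'X^bigelow_inv_count else 0 :> {poly R}.
Proof.
move=> le_c5 lt_r5; have /allP/(_ c) := bigelow_burau_checked.
rewrite mem_iota ltnS le_c5 => /(_ isT)/allP/(_ r); rewrite mem_iota lt_r5 => /(_ isT).
move/(@zpoly_eq0 R); rewrite zpolyB => /eqP; rewrite subr_eq0 => /eqP->.
by case: (r == c); rewrite ?zpoly_zXn.
Qed.

Lemma burau_bigelow_delta (F : fieldType) (t : F) c : t != 0 ->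
  burau_word t bigelow (delta c) = delta c.
Proof.
move=> t_neq0; apply: functional_extensionality => r.
have [lt_r5 | le5_r] := ltnP r 5; last exact: burau_word_local bigelow_letters_lt4 le5_r.
set c5 := minn c 5.
have c5_eq x : (x < 5)%N -> (x == c5) = (x == c) by rewrite /c5; case: (leqP c 5); lia.
have delta_c : burau_agrees t (delta c) (zunit c5).
  move=> x lt_x5; rewrite (nth_map 0%N) ?size_iota // nth_iota // add0n c5_eq // /delta.
  by case: (x == c); rewrite ?zpoly_cons ?rmorph1 /= ?mul0r ?add0r ?hornerC ?horner0.
have := zburau_word_agrees _ t_neq0 _ _ _ bigelow_letters_lt4 delta_c _ lt_r5.
rewrite foldr_scale_inverse_letters; last exact: burau_letter_scale.
rewrite -/bigelow_inv_count bigelow_burau_entry ?geq_minr // c5_eq // => scaled.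
apply: (mulfI (expf_neq0 bigelow_inv_count t_neq0)); rewrite scaled /delta.
by case: (r == c); rewrite ?hornerXn ?horner0 ?mulr1 ?mulr0.
Qed.

Definition code5 (s : seq bool) : nat := foldr (fun (b : bool) c => b + c.*2)%N 0%N s.

Definition state5 (c : nat) : seq bool := mkseq (fun j => odd (c %/ 2 ^ j)) 5.

Lemma state5K s : size s = 5%N -> state5 (code5 s) = s.
Proof.
by case: s => [|a [|b [|c [|d [|e []]]]]] //= _; case: a; case: b; case: c; case: d; case: e.
Qed.

Lemma code5_lt s : size s = 5%N -> (code5 s < 32)%N.
Proof.
by case: s => [|a [|b [|c [|d [|e []]]]]] //= _; case: a; case: b; case: c; case: d; case: e.
Qed.

Definition swap5 (i : nat) (s : seq bool) : seq bool := mkseq (swap_at i (nth false s)) 5.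

Lemma swap_at_nth i s : (i < 4)%N -> size s = 5%N ->
  swap_at i (nth false s) = nth false (swap5 i s).
Proof.
move=> lt_i4 size_s; apply: functional_extensionality => j.
have [lt_j5 | le5_j] := ltnP j 5; first by rewrite nth_mkseq.
rewrite nth_default ?size_mkseq // swap_at_out ?nth_default ?size_s //; apply/eqP; lia.
Qed.

Definition zhecke_diag (b x y : bool) : seq Z :=
  if x == y then (if b then [:: 0; 1] else [:: 1])
  else if x then (if b then [:: -1; 1] else [::]) else (if b then [::] else [:: 1; -1]).

Definition zhecke_swap (x y : bool) : seq Z :=
  if x == y then [::] else if x then [:: 1] else [:: 0; 1].

Definition zhecke_entry (l : nat * bool) (V : seq (seq Z)) (s : seq bool) : seq Z :=
  let: (i, b) := l in
  zadd (zmul (zhecke_diag b (nth false s i) (nth false s i.+1)) (nth [::] V (code5 s)))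
       (zmul (zhecke_swap (nth false s i) (nth false s i.+1)) (nth [::] V (code5 (swap5 i s)))).

Definition zhecke_letter l V : seq (seq Z) := [seq zhecke_entry l V (state5 c) | c <- iota 0 32].

Definition zhecke_word (w : seq (nat * bool)) V := foldr zhecke_letter V w.

Section SymbolicHecke.

Context {F : fieldType}.
Variable q : F.
Hypothesis q_neq0 : q != 0.

Lemma zhecke_diagE b x y :
  (zpoly (zhecke_diag b x y)).[q] = hecke_diag q x y - (~~ b)%:R * (q - 1).
Proof.
by case: b; case: x; case: y;
  rewrite /zhecke_diag /hecke_diag /= !hornerE ?rmorphN ?rmorph1; ring.
Qed.

Lemma zhecke_swapE x y : (zpoly (zhecke_swap x y)).[q] = hecke_swap q x y.
Proof.
by case: x; case: y; rewrite /zhecke_swap /hecke_swap /= !hornerE ?rmorph1; ring.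
Qed.

Definition hecke_agrees (f : (nat -> bool) -> F) (V : seq (seq Z)) :=
  forall s, size s = 5%N -> f (nth false s) = (zpoly (nth [::] V (code5 s))).[q].

Let hecke_scaled := scale_inverse_letters q (hecke_letter q).

Lemma zhecke_letter_agrees l f V : (l.1 < 4)%N -> hecke_agrees f V ->
  hecke_agrees (hecke_scaled l f) (zhecke_letter l V).
Proof.
case: l => i b /= lt_i4 fV s size_s.
rewrite (nth_map 0%N) ?size_iota ?code5_lt // nth_iota ?code5_lt // add0n state5K //.
rewrite /zhecke_entry zpolyD !zpolyM !hornerE zhecke_diagE zhecke_swapE -!fV ?size_mkseq //.
rewrite -swap_at_nth // /hecke_scaled /scale_inverse_letters /hecke_letter.
by case: b => /=; rewrite /hecke_inv /hecke; field.
Qed.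

Lemma zhecke_word_agrees w f V : all (fun l => (l.1 < 4)%N) w -> hecke_agrees f V ->
  hecke_agrees (foldr hecke_scaled f w) (zhecke_word w V).
Proof.
move=> w_lt4 fV; elim: w w_lt4 => [|l w IHw] //= /andP[l_lt4 w_lt4].
exact: zhecke_letter_agrees (IHw w_lt4).
Qed.

End SymbolicHecke.

Definition hecke_source : seq bool := [:: false; true; true; false; false].
Definition hecke_target : seq bool := [:: false; true; false; false; true].

Definition hecke_source_indicator {F : fieldType} (x : nat -> bool) : F :=
  (mkseq x 5 == hecke_source)%:R.

Definition zhecke_source : seq (seq Z) :=
  [seq if state5 c == hecke_source then [:: 1] else [::] | c <- iota 0 32].

Definition bigelow_hecke_poly : seq Z :=
  nth [::] (zhecke_word bigelow zhecke_source) (code5 hecke_target).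

Lemma bigelow_hecke_poly_coef31 : nth 0 bigelow_hecke_poly 31 = 1.
Proof. by vm_compute. Qed.

Lemma bigelow_hecke_poly_neq0 (R : comNzRingType) : zpoly bigelow_hecke_poly != 0 :> {poly R}.
Proof.
apply/eqP => /(congr1 (fun p : {poly R} => p`_31)).
by rewrite coef_zpoly bigelow_hecke_poly_coef31 rmorph1 coef0 => /eqP; rewrite oner_eq0.
Qed.

Lemma bigelow_hecke_entry (F : fieldType) (q : F) : q != 0 ->
  (zpoly bigelow_hecke_poly).[q]
  = q ^+ bigelow_inv_count * hecke_word q bigelow hecke_source_indicator (nth false hecke_target).
Proof.
move=> q_neq0; have source_agrees : hecke_agrees q hecke_source_indicator zhecke_source.
  move=> s size_s; rewrite (nth_map 0%N) ?size_iota ?code5_lt // nth_iota ?code5_lt //.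
  rewrite add0n state5K // /hecke_source_indicator -{1}size_s mkseq_nth.
  by case: (s == hecke_source); rewrite /= !hornerE ?rmorph1.
have := zhecke_word_agrees _ q_neq0 _ _ _ bigelow_letters_lt4 source_agrees hecke_target erefl.
rewrite foldr_scale_inverse_letters; last exact: hecke_letter_scale.
by move=> scaled; rewrite /bigelow_hecke_poly -scaled.
Qed.

Lemma closed_field_roots (F : closedFieldType) (p : {poly F}) :
  p != 0 -> exists rs : seq F, forall x, root p x -> x \in rs.
Proof.
move=> p_neq0; have [rs def_p] := closed_field_poly_normal p; exists rs => x.
by rewrite def_p rootZ ?lead_coef_eq0 // root_prod_XsubC.
Qed.

Definition lift_word m (w : seq (nat * bool)) : word m.+2 := [seq (inord l.1, l.2) | l <- w].

Lemma nat_lift_word m w : all (fun l => (l.1 <= m)%N) w -> nat_word (lift_word m w) = w.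
Proof.
move=> w_le_m; rewrite /nat_word -map_comp; apply: map_id_in => -[i b] /(allP w_le_m) /= le_i_m.
by rewrite inordK.
Qed.

Theorem proposition2p2 (n : nat) (hn : (5 <= n)%N) :
  exists s : seq algC,
    forall (k : nat) (q : algC),
      ~~ odd k -> k.-primitive_root q -> q \notin s ->
      ~ (forall w : word n,
            burau_eval n (- q) w = 1%:M <-> in_Bnk n k w).
Proof.
have [rs rsP] := closed_field_roots _ _ (bigelow_hecke_poly_neq0 algC).
exists (-1 :: rs) => k q even_k prim_q; rewrite inE negb_or => /andP[q_neqN1 q_notin_rs] kerB.
have qk := prim_expr_order prim_q.
have q_neq0 : q != 0.
  by have := expf_eq0 q k; rewrite qk oner_eq0 (prim_order_gt0 prim_q) => /esym/negbT.
have q1_neq0 : q + 1 != 0 by rewrite addr_eq0.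
have [m def_n] : exists m, n = m.+2 by exists n.-2; lia.
subst n; have bigelow_le_m : all (fun l => (l.1 <= m)%N) bigelow.
  by apply: sub_all bigelow_letters_lt4 => l /= lt_l4; lia.
have w_Bnk : in_Bnk m.+2 k (lift_word m bigelow).
  apply/kerB/burau_eval_eq1 => [|c]; first by rewrite oppr_eq0.
  by rewrite nat_lift_word // burau_bigelow_delta // oppr_eq0.
have := hecke_word_Bnk q q_neq0 _ _ _ hecke_source_indicator qk even_k q1_neq0 w_Bnk.
rewrite nat_lift_word // => fixes_source.
move/negP: q_notin_rs; apply; apply: rsP.
by rewrite /root bigelow_hecke_entry // fixes_source /hecke_source_indicator mulr0.
Qed.
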